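(* Let $k\ge 2$ and $\ell\ge 2$ be integers, and let $H(x)=B_{k+1}(\ell x+1)-B_{k+1}(x+1)\in\mathbb{Q}[x]$. Then $H(x)$ has at least three distinct complex roots.
   Context: $B_q(x)=\sum_{i=0}^{q}\binom{q}{i}B_i x^{q-i}$ denotes the $q$-th Bernoulli polynomial, where $B_i$ are the Bernoulli numbers with $B_0=1$, $B_1=-1/2$, $B_2=1/6$, $\dots$. For every integer $m\ge 1$ one has $H(m)=(k+1)\sum_{j=m+1}^{\ell m} j^k$. *)

From HB Require Import structures.
From mathcomp Require Import all_boot all_order all_algebra all_field.
Set Implicit Arguments. Unset Strict Implicit. Unset Printing Implicit Defensive.
Import Order.TTheory GRing.Theory Num.Theory.
Local Open Scope ring_scope.

(* bern_seq n = [:: B_0; ...; B_n], Bernoulli numbers with B_1 = -1/2,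
   via B_0 = 1 and B_n = -1/(n+1) * \sum_{i<n} C(n+1,i) B_i. *)
Fixpoint bern_seq (n : nat) : seq rat :=
  match n with
  | 0%N => [:: 1]
  | n'.+1 => let s := bern_seq n' in
      rcons s (- (n'.+2%:R)^-1 *
               \sum_(i < n'.+1) ('C(n'.+2, i))%:R * nth 0 s i)
  end.

Definition bernoulli (n : nat) : rat := nth 0 (bern_seq n) n.

Definition bernoulli_poly (q : nat) : {poly rat} :=
  \sum_(i < q.+1) (('C(q, i))%:R * bernoulli i) *: 'X^(q - i).

Definition Hpoly (k l : nat) : {poly rat} :=
  (bernoulli_poly k.+1) \Po (l%:R *: 'X + 1) - (bernoulli_poly k.+1) \Po ('X + 1).

From HB Require Import structures.
From mathcomp Require Import all_boot all_order all_algebra all_field.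
From mathcomp Require Import ring zify.
Import GRing.Theory Num.Theory.

(* With n = k + 1, [Hpoly k l] is G(x + 1) for G(x) := B_n(l x + 1) - B_n(x).
   Since B_n(x + y) = \sum_s C(n, s) B_s(y) x^(n - s), the coefficient of
   x^(n - s) in G is C(n, s) (l^(n - s) B_s(1) - B_s); hence G(0) = 0, the
   coefficients e0, e1, e2 of x^n, x^(n - 1), x^(n - 2) are nonzero and, as
   B_3 = 0, that of x^(n - 3) vanishes.  If G had at most two distinct roots,
   0 and v, it would be c x^(n - b) (x - v)^b; the vanishing x^(n - 3)
   coefficient forces b = 2, whence e1^2 = 4 e0 e2.  With u = l^(n - 2) this
   reads 3n (lu + 1)^2 + 4(n - 1)(l^2 + 1)u = 4(n - 1)(l^2 u^2 + 1), which is
   impossible: modulo u it gives u | n - 4, while 0 < n - 4 < u once n >= 5. *)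

Lemma bin_trinomial n i k : 'C(n, i) * 'C(n - i, k) = 'C(n, i + k) * 'C(i + k, i).
Proof.
have [le_ikn|lt_nik] := leqP (i + k) n; last first.
  rewrite [('C(n, i + k))]bin_small // mul0n.
  have [le_in|lt_ni] := leqP i n; last by rewrite bin_small.
  by rewrite [('C(n - i, k))]bin_small ?muln0 //; lia.
apply/eqP; rewrite -(@eqn_pmul2r (i`! * k`! * (n - (i + k))`!)) ?muln_gt0 ?fact_gt0 //.
have E1 := bin_fact (leq_addr k i); rewrite addKn in E1.
have E2 := @bin_fact (n - i) k ltac:(lia); rewrite subnDA in E2 *.
have E3 := @bin_fact n i ltac:(lia).
have E4 := @bin_fact n (i + k) le_ikn; rewrite subnDA -E1 in E4.
by rewrite -E2 in E3; apply/eqP; nia.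
Qed.

Lemma nat_discr_neq n u l : 3 <= n -> 2 <= u -> n - 4 < u ->
  3 * n * (l * u + 1) ^ 2 + 4 * (n - 1) * (l ^ 2 + 1) * u !=
  4 * (n - 1) * (l ^ 2 * u ^ 2 + 1).
Proof.
move=> le3n le2u ltu; apply/eqP => E.
have [lt_4n|le_n4] := ltnP 4 n.
  have E' : n - 4 + u * (4 * (n - 1) * l ^ 2 * u) =
            u * (3 * n * l ^ 2 * u + 6 * n * l + 4 * (n - 1) * (l ^ 2 + 1)) by nia.
  have : u %| n - 4.
    by rewrite -(@dvdn_addl (u * (4 * (n - 1) * l ^ 2 * u))) ?dvdn_mulr // E' dvdn_mulr.
  by move/dvdn_leq; lia.
(* For n <= 4 already 3n >= 4(n - 1), so the left-hand side is larger. *)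
have t_gt0 : 0 < 4 * (n - 1) * (l ^ 2 + 1) * u by rewrite !muln_gt0; lia.
move: E t_gt0; rewrite (_ : l ^ 2 * u ^ 2 = (l * u) ^ 2); last by ring.
move: (l * u) (4 * (n - 1) * (l ^ 2 + 1) * u) => w t.
have [->|->] : n = 3 \/ n = 4 by lia.
all: by move=> E t_gt0; clear -E t_gt0; nia.
Qed.

Local Open Scope ring_scope.

Lemma coef_scaleX_add1_exp (R : comNzRingType) (a : R) d j :
  ((a *: 'X + 1) ^+ d)`_j = a ^+ j *+ 'C(d, j).
Proof.
rewrite addrC exprDn.
have -> : \sum_(i < d.+1) (1 ^+ (d - i) * (a *: 'X) ^+ i) *+ 'C(d, i)
   = \poly_(i < d.+1) (a ^+ i *+ 'C(d, i)) :> {poly R}.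
  rewrite poly_def; apply: eq_bigr => i _.
  by rewrite expr1n mul1r exprZn scalerMnl.
by rewrite coef_poly; case: ltnP => // ?; rewrite bin_small.
Qed.

Lemma coef_XsubC_exp (R : comNzRingType) (v : R) b j :
  (('X - v%:P) ^+ b)`_j = (- v) ^+ (b - j) *+ 'C(b, j).
Proof.
rewrite -polyCN addrC exprDn.
have -> : \sum_(i < b.+1) ((- v)%:P ^+ (b - i) * 'X ^+ i) *+ 'C(b, i)
   = \poly_(i < b.+1) ((- v) ^+ (b - i) *+ 'C(b, i)) :> {poly R}.
  rewrite poly_def; apply: eq_bigr => i _.
  by rewrite -rmorphXn mul_polyC scalerMnl.
by rewrite coef_poly; case: ltnP => // ?; rewrite bin_small.
Qed.

Lemma subleading_coef_sqr (F : numDomainType) (p : {poly F}) (c v : F) a b n :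
  p = c *: ('X^a * ('X - v%:P) ^+ b) -> size p = n.+1 -> (3 <= n)%N ->
  p`_(n - 1)%N != 0 -> p`_(n - 2)%N != 0 -> p`_(n - 3)%N = 0 ->
  p`_(n - 1)%N ^+ 2 = 4 * p`_n * p`_(n - 2)%N.
Proof.
move=> Dp size_p le3n p1_neq0 p2_neq0 p3_eq0.
have c_neq0 : c != 0 by apply/eqP => c0; move: size_p; rewrite Dp c0 scale0r size_poly0.
have Dn : n = (a + b)%N.
  apply/eqP; rewrite -eqSS -size_p Dp size_scale //.
  rewrite size_mul ?expf_neq0 ?polyX_eq0 ?polyXsubC_eq0 //.
  by rewrite size_polyXn size_exp_XsubC addSn addnS.
have coef_p j :
    p`_j = c * (if (j < a)%N then 0 else (- v) ^+ (b - (j - a)) *+ 'C(b, j - a)).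
  by rewrite Dp coefZ coefXnM coef_XsubC_exp.
clear Dp size_p.
have le2b : (2 <= b)%N.
  rewrite leqNgt; apply: contra p2_neq0 => ltb2.
  by rewrite coef_p ifT ?mulr0 //; lia.
have Db : b = 2%N.
  apply/eqP; rewrite eqn_leq le2b andbT leqNgt; apply/negP => lt2b.
  have v0 : v = 0.
    move: p3_eq0; rewrite coef_p ifF; last lia.
    rewrite (_ : (b - (n - 3 - a) = 3)%N); last lia.
    move/eqP; rewrite mulf_eq0 (negbTE c_neq0) mulrn_eq0 expf_eq0 oppr_eq0 /=.
    have le_kb : (n - 3 - a <= b)%N by lia.
    by rewrite eqn0Ngt bin_gt0 le_kb => /eqP.
  move: p1_neq0; rewrite coef_p ifF; last lia.
  rewrite (_ : (b - (n - 1 - a) = 1)%N); last lia.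
  by rewrite v0 oppr0 expr1 mul0rn mulr0 eqxx.
rewrite !coef_p !ifF; try lia.
rewrite (_ : (n - a = 2)%N); last lia.
rewrite (_ : (n - 1 - a = 1)%N); last lia.
rewrite (_ : (n - 2 - a = 0)%N); last lia.
by rewrite Db subnn subSS !subn0 bin0 bin1 binn; ring.
Qed.

Lemma big_prod_XsubC_two_values (F : fieldType) (v : F) (r : seq F) :
  all (fun z => (z == 0) || (z == v)) r ->
  \prod_(z <- r) ('X - z%:P) =
    'X^(count_mem 0 r) * ('X - v%:P) ^+ (count (predC1 0) r).
Proof.
elim: r => [|x r IH]; first by rewrite big_nil mulr1.
rewrite /= => /andP[x0v /IH {}IH]; rewrite big_cons IH.
have [->|x_neq0] := eqVneq x 0; first by rewrite subr0 exprS mulrA.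
by rewrite (negbTE x_neq0) /= in x0v; rewrite (eqP x0v) exprS; ring.
Qed.

Lemma closed_poly_three_roots (F : closedFieldType) (p : {poly F}) :
  p != 0 -> root p 0 ->
  (forall (c v : F) (a b : nat), p != c *: ('X^a * ('X - v%:P) ^+ b)) ->
  exists z1 z2 z3 : F,
    [/\ z1 != z2, z1 != z3, z2 != z3 & [/\ root p z1, root p z2 & root p z3]].
Proof.
move=> p_neq0 root_p0 not_two_roots.
have [r Dp] := closed_field_poly_normal p.
have root_p z : root p z = (z \in r).
  by rewrite Dp rootZ ?lead_coef_eq0 // root_prod_XsubC.
have outside_pair v : has (fun z => (z != 0) && (z != v)) r.
  apply: contraR (not_two_roots (lead_coef p) v (count_mem 0 r) (count (predC1 0) r)).
  move=> /hasPn in_pair; apply/eqP; rewrite {1}Dp (big_prod_XsubC_two_values _ v) //.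
  by apply/allP => z /in_pair; rewrite negb_and !negbK.
have [v vr /andP[v_neq0 _]] := hasP (outside_pair 0).
have [w wr /andP[w_neq0 w_neq_v]] := hasP (outside_pair v).
by exists 0, v, w; rewrite !root_p eq_sym v_neq0 eq_sym w_neq0 eq_sym w_neq_v -root_p.
Qed.

Lemma three_roots_of_coefs (F : numClosedFieldType) (p : {poly F}) n :
  (3 <= n)%N -> size p = n.+1 -> p`_0 = 0 ->
  p`_(n - 1)%N != 0 -> p`_(n - 2)%N != 0 -> p`_(n - 3)%N = 0 ->
  p`_(n - 1)%N ^+ 2 != 4 * p`_n * p`_(n - 2)%N ->
  exists z1 z2 z3 : F,
    [/\ z1 != z2, z1 != z3, z2 != z3 & [/\ root p z1, root p z2 & root p z3]].
Proof.
move=> le3n size_p p0_eq0 p1_neq0 p2_neq0 p3_eq0 discr_neq0.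
apply: closed_poly_three_roots.
- by rewrite -size_poly_eq0 size_p.
- by rewrite rootE horner_coef0 p0_eq0.
- move=> c v a b; apply: contra discr_neq0 => /eqP Dp; apply/eqP.
  exact: subleading_coef_sqr Dp size_p le3n p1_neq0 p2_neq0 p3_eq0.
Qed.

Lemma bernoulli_recurrence n : (2 <= n)%N ->
  \sum_(i < n) 'C(n, i)%:R * bernoulli i = 0.
Proof.
case: n => [|[|n]] // _; rewrite big_ord_recr /= binSn.
have size_bern_seq m : size (bern_seq m) = m.+1.
  by elim: m => //= m IH; rewrite size_rcons IH.
have nth_bern_seq m i : (i <= m)%N -> nth 0 (bern_seq m) i = bernoulli i.
  elim: m => [|m IH]; first by rewrite leqn0 => /eqP->.
  rewrite leq_eqVlt => /orP[/eqP->//|]; rewrite ltnS => le_im.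
  by rewrite /= nth_rcons size_bern_seq ltnS le_im IH.
have -> : bernoulli n.+1 =
    - n.+2%:R^-1 * \sum_(i < n.+1) 'C(n.+2, i)%:R * bernoulli i.
  rewrite /bernoulli /= nth_rcons size_bern_seq ltnn eqxx.
  by congr (_ * _); apply: eq_bigr => i _; rewrite nth_bern_seq // -ltnS.
by rewrite mulNr mulrN mulrA mulfV ?pnatr_eq0 // mul1r addrN.
Qed.

Lemma bernoulli1 : bernoulli 1 = - 2^-1.
Proof. by apply/eqP; rewrite /bernoulli /= !big_ord_recr !big_ord0; vm_compute. Qed.

Lemma bernoulli2 : bernoulli 2 = 6^-1.
Proof. by apply/eqP; rewrite /bernoulli /= !big_ord_recr !big_ord0; vm_compute. Qed.

Lemma bernoulli3 : bernoulli 3 = 0.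
Proof. by apply/eqP; rewrite /bernoulli /= !big_ord_recr !big_ord0; vm_compute. Qed.

Lemma coef_bernoulli_poly n j : (bernoulli_poly n)`_j =
  \sum_(i < n.+1) 'C(n, i)%:R * bernoulli i * (n - i == j)%N%:R.
Proof.
rewrite /bernoulli_poly coef_sum; apply: eq_bigr => i _.
by rewrite coefZ coefXn eq_sym.
Qed.

Lemma coef_bernoulli_poly_comp n (a : rat) j :
  (bernoulli_poly n \Po (a *: 'X + 1))`_j =
  \sum_(i < n.+1) 'C(n, i)%:R * bernoulli i * (a ^+ j *+ 'C(n - i, j)).
Proof.
rewrite /bernoulli_poly linear_sum coef_sum; apply: eq_bigr => i _.
by rewrite linearZ /= rmorphXn /= comp_polyX coefZ coef_scaleX_add1_exp.
Qed.

Lemma horner_bernoulli_poly1 s :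
  (bernoulli_poly s).[1] = \sum_(i < s.+1) 'C(s, i)%:R * bernoulli i.
Proof.
rewrite /bernoulli_poly horner_sum; apply: eq_bigr => i _.
by rewrite hornerZ hornerXn expr1n mulr1.
Qed.

Lemma horner_bernoulli_poly1_ge2 s : (2 <= s)%N ->
  (bernoulli_poly s).[1] = bernoulli s.
Proof.
move=> le2s; rewrite horner_bernoulli_poly1 big_ord_recr /=.
by rewrite bernoulli_recurrence // binn mul1r add0r.
Qed.

Definition Gpoly n l := bernoulli_poly n \Po (l%:R *: 'X + 1) - bernoulli_poly n.

(* [\Po] shares level 50 with [-], so the right-hand side of [Hpoly] parses as
   [(B \Po (l X + 1) - B) \Po (X + 1)] with [B := bernoulli_poly k.+1]. *)
Lemma Hpoly_Gpoly k l : Hpoly k l = Gpoly k.+1 l \Po ('X + 1).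
Proof. by []. Qed.

Lemma root_Hpoly k l (z : algC) :
  root (map_poly ratr (Hpoly k l)) (z - 1) = root (map_poly ratr (Gpoly k.+1 l)) z.
Proof.
rewrite Hpoly_Gpoly map_comp_poly !rootE horner_comp.
by rewrite map_polyXaddC hornerD hornerX hornerC rmorph1 subrK.
Qed.

Lemma natr_expr_neq1 (R : numDomainType) l m :
  (2 <= l)%N -> (0 < m)%N -> (l%:R : R) ^+ m != 1.
Proof.
by move=> le2l m_gt0; rewrite -natrX pnatr_eq1 -(exp1n m) eqn_exp2r //; lia.
Qed.

Lemma coef_Gpoly n l s : (s <= n)%N ->
  (Gpoly n l)`_(n - s)%N =
  'C(n, s)%:R * (l%:R ^+ (n - s)%N * (bernoulli_poly s).[1] - bernoulli s).
Proof.
move=> le_sn; have lt_sn1 : (s < n.+1)%N by [].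
rewrite coefB coef_bernoulli_poly_comp coef_bernoulli_poly horner_bernoulli_poly1.
rewrite mulrBr; congr (_ - _); last first.
  rewrite (bigD1 (Ordinal lt_sn1)) //= eqxx mulr1 big1 ?addr0 // => i /eqP ne_is.
  rewrite (_ : (n - i == n - s)%N = false) ?mulr0 //; apply/eqP => E.
  by apply: ne_is; apply: val_inj => /=; have := ltn_ord i; lia.
rewrite mulrCA mulr_sumr.
rewrite (big_ord_widen n.+1 (fun i : nat => 'C(n, s)%:R * ('C(s, i)%:R * bernoulli i))) //.
rewrite mulr_sumr [RHS]big_mkcond.
apply: eq_bigr => i _ /=; case: ltnP => [le_is|lt_si]; last first.
  by rewrite (@bin_small (n - i)) ?mulr0n ?mulr0 //; have := ltn_ord i; lia.
have -> : 'C(n - i, n - s) = 'C(n - i, s - i).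
  by rewrite -bin_sub; [congr 'C(_, _)|]; lia.
have := bin_trinomial n i (s - i); rewrite subnKC; last lia.
move=> /(congr1 (fun m => m%:R : rat)); rewrite !natrM => E.
rewrite -mulr_natr; transitivity
  (l%:R ^+ (n - s) * ('C(n, i)%:R * 'C(n - i, s - i)%:R * bernoulli i)).
  by ring.
by rewrite E; ring.
Qed.

Section GpolyCoefficients.
Variables (n l : nat).

Lemma coef0_Gpoly : (2 <= n)%N -> (Gpoly n l)`_0 = 0.
Proof.
move=> le2n; have := coef_Gpoly n l n (leqnn n); rewrite subnn => ->.
by rewrite horner_bernoulli_poly1_ge2 // expr0 mul1r subrr mulr0.
Qed.

Lemma coefn_Gpoly : (Gpoly n l)`_n = l%:R ^+ n - 1.
Proof.
have := coef_Gpoly n l 0 (leq0n n); rewrite subn0 => ->.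
by rewrite horner_bernoulli_poly1 big_ord1 bin0 mul1r mulr1.
Qed.

Lemma coef_subn1_Gpoly : (1 <= n)%N ->
  (Gpoly n l)`_(n - 1)%N = n%:R * (l%:R ^+ (n - 1)%N + 1) / 2.
Proof.
move=> le1n; rewrite coef_Gpoly // horner_bernoulli_poly1 !big_ord_recr big_ord0 /=.
by rewrite bin1 bin0 binn bernoulli1 /bernoulli /=; field.
Qed.

Lemma coef_subn2_Gpoly : (2 <= n)%N ->
  (Gpoly n l)`_(n - 2)%N = 'C(n, 2)%:R * (l%:R ^+ (n - 2)%N - 1) / 6.
Proof.
move=> le2n; rewrite coef_Gpoly // horner_bernoulli_poly1_ge2 // bernoulli2.
by field.
Qed.

Lemma coef_subn3_Gpoly : (3 <= n)%N -> (Gpoly n l)`_(n - 3)%N = 0.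
Proof.
move=> le3n; rewrite coef_Gpoly // horner_bernoulli_poly1_ge2 // bernoulli3.
by rewrite mulr0 subrr mulr0.
Qed.

Lemma size_Gpoly : (0 < n)%N -> (2 <= l)%N -> size (Gpoly n l) = n.+1.
Proof.
move=> n_gt0 le2l; apply/eqP; rewrite eqn_leq andbC ltnNge.
have lead_neq0 : (Gpoly n l)`_n != 0.
  by rewrite coefn_Gpoly subr_eq0 natr_expr_neq1.
rewrite (contra _ lead_neq0) => [|/leq_sizeP-> //].
apply/leq_sizeP => j lt_nj.
rewrite coefB coef_bernoulli_poly_comp coef_bernoulli_poly.
rewrite !big1 ?subr0 // => i _.
  by rewrite (_ : (n - i == j)%N = false) ?mulr0 //; apply/eqP; lia.
by rewrite (@bin_small (n - i)) ?mulr0n ?mulr0 //; have := ltn_ord i; lia.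
Qed.

End GpolyCoefficients.

Lemma Gpoly_discr_neq n l : (3 <= n)%N -> (2 <= l)%N ->
  (Gpoly n l)`_(n - 1)%N ^+ 2 != 4 * (Gpoly n l)`_n * (Gpoly n l)`_(n - 2)%N.
Proof.
move=> le3n le2l.
rewrite coefn_Gpoly coef_subn1_Gpoly ?coef_subn2_Gpoly; [|lia|lia].
have [u Du] : exists u, u = (l ^ (n - 2))%N by exists (l ^ (n - 2))%N.
have eLn : l%:R ^+ n = l%:R ^+ 2 * u%:R :> rat.
  by rewrite Du natrX -exprD; congr (_ ^+ _); lia.
have eLn1 : l%:R ^+ (n - 1) = l%:R * u%:R :> rat.
  by rewrite Du natrX -exprS; congr (_ ^+ _); lia.
have eLn2 : l%:R ^+ (n - 2) = u%:R :> rat by rewrite Du natrX.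
have eC2 : 'C(n, 2)%:R = n%:R * (n%:R - 1) / 2 :> rat.
  have := mul_bin_left n 1; rewrite bin1 => /(congr1 (fun m => m%:R : rat)).
  rewrite !natrM natrB; last lia.
  move=> E2; transitivity (2%:R * 'C(n, 2)%:R / 2 : rat); first by field.
  by rewrite E2; field.
have n_neq0 : n%:R != 0 :> rat by rewrite pnatr_eq0; lia.
have le_u : (2 ^ (n - 2) <= u)%N by rewrite Du leq_exp2r //; lia.
have ltn2 := ltn_expl (n - 2) (isT : (1 < 2)%N).
have := @nat_discr_neq n u l le3n ltac:(lia) ltac:(lia).
rewrite eLn eLn1 eLn2 eC2; apply: contra; rewrite -subr_eq0 => /eqP E.
rewrite -(eqr_nat rat) !(natrD, natrM, natrX) natrB; last lia.
by rewrite -subr_eq0 -(mulr0 (12 / n%:R)) -E; apply/eqP; field.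
Qed.

Lemma Gpoly_three_roots n l : (3 <= n)%N -> (2 <= l)%N ->
  exists z1 z2 z3 : algC,
    [/\ z1 != z2, z1 != z3, z2 != z3 &
     [/\ root (map_poly ratr (Gpoly n l)) z1,
         root (map_poly ratr (Gpoly n l)) z2 &
         root (map_poly ratr (Gpoly n l)) z3]].
Proof.
move=> le3n le2l.
apply: (three_roots_of_coefs _ _ _ le3n); rewrite ?size_map_poly ?coef_map.
- by rewrite size_Gpoly //; lia.
- by rewrite coef0_Gpoly ?raddf0 //; lia.
- rewrite fmorph_eq0 coef_subn1_Gpoly; last lia.
  rewrite !mulf_neq0 ?invr_eq0 ?pnatr_eq0 //; first lia.
  by rewrite -natrX natr1 pnatr_eq0.
- rewrite fmorph_eq0 coef_subn2_Gpoly; last lia.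
  by rewrite !mulf_neq0 ?invr_eq0 ?pnatr_eq0 -?lt0n ?bin_gt0 ?subr_eq0 ?natr_expr_neq1 //; lia.
- by rewrite coef_subn3_Gpoly ?raddf0.
- have := Gpoly_discr_neq n l le3n le2l; apply: contra => /eqP E; apply/eqP.
  apply: (fmorph_inj (ratr : rat -> algC)).
  by rewrite rmorphXn !rmorphM rmorph_nat.
Qed.

Theorem mainTheorem2 (k l : nat) (hk : (2 <= k)%N) (hl : (2 <= l)%N) :
  exists z1 z2 z3 : algC,
    [/\ z1 != z2, z1 != z3, z2 != z3 &
     [/\ root (map_poly ratr (Hpoly k l)) z1,
         root (map_poly ratr (Hpoly k l)) z2 &
         root (map_poly ratr (Hpoly k l)) z3]].
Proof.
have [z1 [z2 [z3 [d12 d13 d23 [r1 r2 r3]]]]] := Gpoly_three_roots k.+1 l hk hl.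
exists (z1 - 1), (z2 - 1), (z3 - 1).
by rewrite !root_Hpoly !(inj_eq (addIr _)) d12 d13 d23 r1 r2 r3.
Qed.
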